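(* Let $t\ge2$, let $p\ge5$ be a prime, and let $M,N$ be positive integers, $0\le j\le p-1$ and $0\le k\le M-1\le N-1$. Then $$\alpha_t(p,N,j,k)=\alpha_t(p,M,j,k).$$
   Context: $(q)_n=\prod_{k=1}^n(1-q^k)$, $\binom{n}{k}_q=\frac{(q)_n}{(q)_{n-k}(q)_k}$ (zero unless $0\le k\le n$). For $t\ge2$ let $m(t)=2^{t-1}$; $h''(t)=(2^t-1)/3$, $h'(t)=(2^t-4)/3$, $a(t)=(2^{t-1}+1)/3$ if $t$ is even, and $h''(t)=(2^t-2)/3$, $h'(t)=(2^t-5)/3$, $a(t)=(2^t+1)/3$ if $t$ is odd. For an integer $L\ge0$ define the truncation $$\mathscr{F}_t(q;L)=(-1)^{h''(t)}q^{-h'(t)}\sum_{n=0}^{L}(q)_n\sum_{(j_1,\dots,j_{m(t)-1})}q^{\frac{-a(t)+\sum_{\ell}\ell j_\ell}{m(t)}+\sum_{\ell}\binom{j_\ell}{2}}\sum_{k=0}^{m(t)-1}\prod_{\ell=1}^{m(t)-1}\binom{n+I(\ell\le k)}{j_\ell}_q,$$ the middle sum over tuples of nonnegative integers with $3\sum_{\ell=1}^{m(t)-1}\ell j_\ell\equiv1\pmod{m(t)}$ and $I(\ell\le k)=1$ if $\ell\le k$, else $0$; it is a Laurent polynomial in $q$ with integer coefficients. Its $p$-dissection is the unique representation $\mathscr{F}_t(q;L)=\sum_{i=0}^{p-1}q^i\mathcal{A}_{p,t}(L,i,q^p)$ with Laurent polynomials $\mathcal{A}_{p,t}(L,i,x)\in\mathbb{Z}[x,x^{-1}]$.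 For $n\ge1$ define $\alpha_t(p,n,i,k)$ by the power series expansion $\mathcal{A}_{p,t}(pn-1,i,1-q)=\sum_{k\ge0}\alpha_t(p,n,i,k)q^k$. *)

From HB Require Import structures.
From mathcomp Require Import all_boot all_order all_algebra.
Set Implicit Arguments. Unset Strict Implicit. Unset Printing Implicit Defensive.
Import Order.TTheory GRing.Theory Num.Theory.
Local Open Scope ring_scope.

Definition mt (t : nat) : nat := (2 ^ t.-1)%N.
Definition hpp (t : nat) : nat := if odd t then ((2 ^ t - 2) %/ 3)%N else ((2 ^ t - 1) %/ 3)%N.
Definition hp (t : nat) : nat := if odd t then ((2 ^ t - 5) %/ 3)%N else ((2 ^ t - 4) %/ 3)%N.
Definition at_ (t : nat) : nat := if odd t then ((2 ^ t + 1) %/ 3)%N else ((2 ^ t.-1 + 1) %/ 3)%N.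

Definition qpoch (n : nat) : {poly rat} := \prod_(k < n) (1 - 'X^(k.+1)).

(* Gaussian binomial: (q)_n / ((q)_(n-k) (q)_k), zero unless k <= n.
   The division is exact polynomial division over the field rat. *)
Definition qbinom (n k : nat) : {poly rat} :=
  if (k <= n)%N then qpoch n %/ (qpoch (n - k) * qpoch k) else 0.

(* For a tuple (j_1,...,j_{m-1}) (stored 0-indexed, j_l = js_(l-1)):
   S = sum_l l * j_l. *)
Definition Ssum (m L : nat) (js : m.-1.-tuple 'I_L.+2) : nat :=
  (\sum_(l < m.-1) l.+1 * tnth js l)%N.

(* exponent (-a + S)/m + sum_l binom(j_l,2) (an integer >= 0 under the
   congruence condition) *)
Definition Eexp (t L : nat) (js : (mt t).-1.-tuple 'I_L.+2) : nat :=
  ((Ssum js - at_ t) %/ mt t + \sum_(l < (mt t).-1) 'C(tnth js l, 2))%N.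

(* F_t(q;L) = q^(-h'(t)) * Fpoly t L  (a Laurent polynomial).
   The j_l range over 0..L+1: larger j_l give vanishing q-binomials since
   n + I(l<=k) <= L+1. *)
Definition Fpoly (t L : nat) : {poly rat} :=
  (-1) ^+ hpp t *
  \sum_(n < L.+1) qpoch n *
    \sum_(js : (mt t).-1.-tuple 'I_L.+2 | 3 * Ssum js == 1 %[mod mt t])
      'X^(Eexp js) *
      \sum_(k < mt t) \prod_(l < (mt t).-1) qbinom (n + (l.+1 <= k)) (tnth js l).

(* A Laurent polynomial is represented by a pair (P, s), standing for
   x^(-s) * P(x).  Its coefficient of x^e (e : int): *)
Definition lcoef (P : {poly rat}) (s : nat) (e : int) : rat :=
  if (0 <= e + s%:Z)%R then P`_(absz (e + s%:Z)) else 0.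

Definition Fcoef (t L : nat) (e : int) : rat := lcoef (Fpoly t L) (hp t) e.

(* p-dissection component A_{p,t}(L,i,x), represented as (Adiss_poly, h'(t)):
   its coefficient of x^r is the coefficient of q^(i + p r) in F_t(q;L). *)
Definition Adiss_poly (t p L i : nat) : {poly rat} :=
  \poly_(r < size (Fpoly t L) + hp t)
     Fcoef t L (i%:Z + p%:Z * (r%:Z - (hp t)%:Z)).

Definition Adiss_shift (t : nat) : nat := hp t.

(* Coefficient of q^k in the power series expansion of x^(-s) Q(x) at
   x = 1 - q, i.e. of Q(1-q) * (1-q)^(-s); modulo q^(k+1),
   (1-q)^(-1) = 1 + q + ... + q^k. *)
Definition series_coef (Q : {poly rat}) (s k : nat) : rat :=
  ((Q \Po (1 - 'X)) * (\sum_(j < k.+1) 'X^j) ^+ s)`_k.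

Definition alpha (t p n i k : nat) : rat :=
  series_coef (Adiss_poly t p (p * n).-1 i) (Adiss_shift t) k.

(* The n-th summand of F_t(q;L) carries the factor (q)_n and, once the range
   of the j_l is cut down to where the q-binomials can be nonzero, no longer
   depends on L.  Hence F_t(q;pN-1) - F_t(q;pM-1) is a multiple of (q)_{pM},
   and so of (q^p;q^p)_M.  Since i < p, multiplying by q^{pa} multiplies the
   i-th dissection component by x^a, so this factor comes out of the
   dissection as (x;x)_M.  At x = 1 - q every factor 1 - x^l of (x;x)_M
   vanishes at q = 0, so the two components differ by O(q^M). *)
From mathcomp Require Import all_boot all_order all_algebra zify ring.
Set Implicit Arguments. Unset Strict Implicit. Unset Printing Implicit Defensive.
Import Order.TTheory GRing.Theory Num.Theory.
Local Open Scope ring_scope.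

Definition qpoch_pow (d M : nat) : {poly rat} := \prod_(l < M) (1 - 'X^(d * l.+1)).

Lemma qpoch_split m n : (m <= n)%N ->
  qpoch n = qpoch m * \prod_(m <= k < n) (1 - 'X^(k.+1)).
Proof.
have qpochE k : qpoch k = \prod_(0 <= l < k) (1 - 'X^(l.+1)) by rewrite big_mkord.
by move=> mn; rewrite !qpochE (big_cat_nat (leq0n m) mn).
Qed.

Lemma qpoch_dvd m n : (m <= n)%N -> qpoch m %| qpoch n.
Proof. by move=> mn; rewrite (qpoch_split mn) dvdp_mulr. Qed.

Lemma qpoch_pow_dvd_qpoch p M : (0 < p)%N -> qpoch_pow p M %| qpoch (p * M).
Proof.
move=> p_gt0; elim: M => [|M IH]; first by rewrite /qpoch_pow big_ord0 dvd1p.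
have le_pM : (p * M <= p * M.+1)%N by rewrite leq_mul2l leqnSn orbT.
rewrite /qpoch_pow big_ord_recr /= (qpoch_split le_pM) dvdp_mul //.
have -> : (p * M.+1 = (p * M + p.-1).+1)%N by rewrite mulnS; lia.
by rewrite big_nat_recr ?leq_addr //= dvdp_mull.
Qed.

Lemma Xn_dvd_qpoch_pow_comp d M : 'X^M %| qpoch_pow d M \Po (1 - 'X).
Proof.
elim: M => [|M IH]; first by rewrite dvd1p.
rewrite /qpoch_pow big_ord_recr /= comp_polyM exprSr dvdp_mul //.
rewrite [X in X %| _](_ : _ = 'X - 0%:P); last by rewrite polyC0 subr0.
rewrite dvdp_XsubCl /root comp_polyB comp_polyC.
by rewrite rmorphXn /= comp_polyX !hornerE expr1n subrr.
Qed.

Lemma lcoefXnM P s n e : lcoef ('X^n * P) s e = lcoef P s (e - n%:Z).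
Proof.
rewrite /lcoef coefXnM addrAC; case: (e + s%:Z) => [m|m].
  rewrite subr_ge0 /= lez_nat; case: ltnP => // n_le_m.
  by rewrite subzn // absz_nat.
have -> : (0 <= Negz m) = false by [].
by rewrite ifF //; apply/negbTE; rewrite NegzE; lia.
Qed.

Section Dissection.

Variables (s p i : nat).
Hypothesis i_lt_p : (i < p)%N.

Definition dissect (P : {poly rat}) : {poly rat} :=
  \poly_(r < size P + s) lcoef P s (i%:Z + p%:Z * (r%:Z - s%:Z)).

Lemma coef_dissect P r : (dissect P)`_r = lcoef P s (i%:Z + p%:Z * (r%:Z - s%:Z)).
Proof.
rewrite coef_poly; case: ltnP => // P_le_r; rewrite /lcoef; case: ifP => // _.
rewrite nth_default //.
have -> : i%:Z + p%:Z * (r%:Z - s%:Z) + s%:Z = (i + p * (r - s) + s)%N :> int.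
  by rewrite !PoszD PoszM subzn // (leq_trans _ P_le_r) // leq_addl.
have := leq_pmull (r - s) (leq_ltn_trans (leq0n i) i_lt_p).
by rewrite absz_nat; move: (p * _)%N (size P) P_le_r => b n; lia.
Qed.

Lemma dissectB P Q : dissect (P - Q) = dissect P - dissect Q.
Proof.
apply/polyP => r; rewrite coefB !coef_dissect /lcoef coefB.
by case: ifP; rewrite ?subr0.
Qed.

Lemma dissect_XnM G a : dissect ('X^(p * a) * G) = 'X^a * dissect G.
Proof.
apply/polyP => r; rewrite coefXnM !coef_dissect lcoefXnM.
case: ltnP => [r_lt_a | a_le_r].
  rewrite /lcoef ifF //; apply/negbTE; rewrite -ltNge PoszM.
  have : r%:Z + 1 <= a%:Z by lia.
  have : i%:Z + 1 <= p%:Z by lia.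
  have : 0 <= s%:Z by [].
  nia.
congr lcoef.
by rewrite PoszM -subzn //; ring.
Qed.

Lemma dissect_qpoch_powM M G :
  dissect (qpoch_pow p M * G) = qpoch_pow 1 M * dissect G.
Proof.
elim: M G => [|M IH] G; first by rewrite /qpoch_pow !big_ord0 !mul1r.
rewrite /qpoch_pow !big_ord_recr /= -!mulrA IH mulrBl mul1r dissectB dissect_XnM.
by rewrite mul1n mulrBl mul1r.
Qed.

End Dissection.

Lemma Adiss_polyE t p L i : Adiss_poly t p L i = dissect (hp t) p i (Fpoly t L).
Proof. by []. Qed.

Lemma series_coefB P Q s k :
  series_coef (P - Q) s k = series_coef P s k - series_coef Q s k.
Proof. by rewrite /series_coef comp_polyB mulrBl coefB. Qed.

Lemma series_coef_qpoch_powM M Q s k : (k < M)%N ->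
  series_coef (qpoch_pow 1 M * Q) s k = 0.
Proof.
move=> k_lt_M; rewrite /series_coef comp_polyM.
have /divpK <- := Xn_dvd_qpoch_pow_comp 1 M.
by rewrite [_ * 'X^M]mulrC -!mulrA coefXnM k_lt_M.
Qed.

Lemma sum_tuple_ord_widen (R : nmodType) m a b (F : seq nat -> R) : (a <= b)%N ->
  (forall s, size s = m -> has (fun x => a < x)%N s -> F s = 0) ->
  \sum_(js : m.-tuple 'I_b.+1) F (map val js) =
  \sum_(js : m.-tuple 'I_a.+1) F (map val js).
Proof.
move=> a_le_b F0; have le_ab1 : (a.+1 <= b.+1)%N by [].
rewrite (bigID (fun js : m.-tuple 'I_b.+1 => all (fun x : 'I_b.+1 => x < a.+1)%N js)) /=.
rewrite [X in _ + X]big1 ?addr0; last first.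
  move=> js; rewrite -has_predC => big_entry; apply: F0.
    by rewrite size_map size_tuple.
  by rewrite has_map; apply: sub_has big_entry => x /=; rewrite -leqNgt.
rewrite (reindex_onto (map_tuple (widen_ord le_ab1))
  (map_tuple (fun x : 'I_b.+1 => inord x : 'I_a.+1))); last first.
  move=> js /allP small; apply: val_inj; rewrite /= -map_comp.
  by apply: map_id_in => x x_js; apply: val_inj; rewrite /= inordK ?small.
apply: eq_big => [js | js _]; last by rewrite /= -map_comp.
rewrite all_map; apply/andP; split; first by apply/allP => x _ /=.
apply/eqP/val_inj; rewrite /= -map_comp; apply: map_id_in => x _.
by apply: val_inj; rewrite /= inordK.
Qed.

Definition Sseq (m : nat) (s : seq nat) : nat := (\sum_(l < m) l.+1 * nth 0 s l)%N.

Definition Eseq (t : nat) (s : seq nat) : nat :=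
  ((Sseq (mt t).-1 s - at_ t) %/ mt t + \sum_(l < (mt t).-1) 'C(nth 0 s l, 2))%N.

Definition Fsummand (t n : nat) (s : seq nat) : {poly rat} :=
  if (3 * Sseq (mt t).-1 s == 1 %[mod mt t])%N then
    'X^(Eseq t s) *
      \sum_(k < mt t) \prod_(l < (mt t).-1) qbinom (n + (l.+1 <= k)) (nth 0 s l)
  else 0.

(* The n-th inner sum of [Fpoly t L] with the j_l restricted to 0..n+1,
   which makes it independent of L. *)
Definition Fterm (t n : nat) : {poly rat} :=
  \sum_(js : (mt t).-1.-tuple 'I_n.+2) Fsummand t n (map val js).

Lemma tnth_map_val m b (js : m.-tuple 'I_b) l :
  (tnth js l : nat) = nth 0 (map val js) l.
Proof.
by case: b js => [|b] js; [case: (tnth js l) | rewrite (nth_map ord0) ?size_tuple -?tnth_nth].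
Qed.

Lemma Fsummand_large t n s : size s = (mt t).-1 ->
  has (fun x => n.+1 < x)%N s -> Fsummand t n s = 0.
Proof.
move=> size_s /(has_nthP 0) [l l_lt x_gt]; rewrite /Fsummand; case: ifP => // _.
rewrite big1 ?mulr0 // => k _; rewrite size_s in l_lt.
rewrite (bigD1 (Ordinal l_lt)) //= /qbinom ifF ?mul0r //.
apply/negbTE; rewrite -ltnNge; apply: leq_ltn_trans x_gt.
by rewrite -[n.+1]addn1 leq_add2l leq_b1.
Qed.

Lemma Fpoly_sum_qpoch t L :
  Fpoly t L = (-1) ^+ hpp t * \sum_(n < L.+1) qpoch n * Fterm t n.
Proof.
congr (_ * _); apply: eq_bigr => n _; congr (_ * _).
rewrite /Fterm -(sum_tuple_ord_widen (ltn_ord n)); last exact: Fsummand_large.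
rewrite big_mkcond; apply: eq_bigr => js _.
have eS : Ssum js = Sseq (mt t).-1 (map val js).
  by apply: eq_bigr => l _; rewrite tnth_map_val.
have eE : Eexp js = Eseq t (map val js).
  by rewrite /Eexp /Eseq eS; congr (_ + _)%N; apply: eq_bigr => l _; rewrite tnth_map_val.
rewrite /Fsummand eS eE; case: ifP => // _; congr (_ * _).
by apply: eq_bigr => k _; apply: eq_bigr => l _; rewrite tnth_map_val.
Qed.

Lemma qpoch_dvd_Fpoly_sub t L1 L2 : (L1 <= L2)%N ->
  qpoch L1.+1 %| Fpoly t L2 - Fpoly t L1.
Proof.
move=> L12; rewrite !Fpoly_sum_qpoch -mulrBr dvdp_mull //.
rewrite -!(big_mkord (fun _ => true) (fun n => qpoch n * Fterm t n)).
rewrite (big_cat_nat (leq0n L1.+1) (L12 : (L1.+1 <= L2.+1)%N)) /= addrC addrK.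
rewrite big_nat_cond; apply: (big_ind (dvdp (qpoch L1.+1))).
- exact: dvdp0.
- exact: dvdp_add.
- by move=> n /andP [/andP [L1_lt_n _] _]; rewrite dvdp_mulr // qpoch_dvd.
Qed.

Theorem lemma4p4 (t p M N j k : nat) :
  (2 <= t)%N -> prime p -> (5 <= p)%N -> (0 < M)%N -> (0 < N)%N ->
  (j <= p - 1)%N -> (k <= M - 1)%N -> (M - 1 <= N - 1)%N ->
  alpha t p N j k = alpha t p M j k.
Proof.
move=> _ _ p_ge5 M_gt0 N_gt0 j_le k_le MN_le.
have j_lt_p : (j < p)%N by lia.
have M_le_N : (M <= N)%N by lia.
have pM_eq : ((p * M).-1.+1 = p * M)%N by apply: prednK; rewrite muln_gt0; lia.
have diff_dvd : qpoch_pow p M %| Fpoly t (p * N).-1 - Fpoly t (p * M).-1.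
  apply: dvdp_trans (qpoch_pow_dvd_qpoch M _) _; first lia.
  rewrite -[in qpoch _]pM_eq qpoch_dvd_Fpoly_sub //.
  by rewrite -!subn1 leq_sub2r // leq_mul2l M_le_N orbT.
apply/eqP; rewrite -subr_eq0 /alpha !Adiss_polyE -series_coefB.
rewrite -dissectB // -(divpK diff_dvd) mulrC dissect_qpoch_powM //.
by rewrite series_coef_qpoch_powM //; lia.
Qed.
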